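(* Let $\underline{V}=(v_1,\dots,v_n)$ be a random signal whose entries are independent, each $v_i$ being equal to $0$ with probability $1-\alpha$ and drawn from a distribution $f$ with probability $\alpha$. Let $\mathcal{K}=\{v_i : v_i\neq 0\}$ be the support set. Consider a bipartite graph with variable nodes $v_1,\dots,v_n$ and check nodes, in which each edge between $v_i$ and check node $c_j$ carries a weight $w_{ij}$, the weights being drawn i.i.d. from a distribution $g$ independently of the signal. The value of check node $c_j$ is $c_j=\sum_{i:\, v_i\in\mathcal{M}(c_j)} w_{ij}v_i$, where $\mathcal{M}(c)$ denotes the set of variable nodes adjacent to $c$. Suppose at least one of $f$ or $g$ is a continuous distribution. Let $c_i$ and $c_j$ be two distinct check nodes and let $\mathcal{V}_i=\mathcal{M}(c_i)\cap\mathcal{K}$ and $\mathcal{V}_j=\mathcal{M}(c_j)\cap\mathcal{K}$. Then: if $c_i=0$, then $\mathcal{V}_i=\emptyset$ with probability one; and if $\mathcal{V}_i\neq\mathcal{V}_j$, then $\Pr(c_i=c_j)=0$.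
   Context: This is the compressed sensing measurement model $\underline{C}=\underline{V}\mathbf{G}$, where the sensing matrix $\mathbf{G}$ is the weighted incidence matrix of the bipartite graph (entry in row $i$, column $j$ equals $w_{ij}$ if $v_i$ and $c_j$ are adjacent and $0$ otherwise). Variable nodes correspond to signal entries and check nodes to measurements.
   Formalization: The weight law g has no atom at 0 (g({0}) = 0), and both conclusions are almost-sure implications; the second says the event $c_i=c_j$ with $\mathcal{V}_i\neq\mathcal{V}_j$ has probability zero. Apart from conventions, each condition added here is assumed in the paper as well or is needed for the statement above to hold. *)

From HB Require Import structures.
From mathcomp Require Import all_boot all_order all_algebra.
From mathcomp Require Import all_classical all_reals all_analysis.
Set Implicit Arguments. Unset Strict Implicit. Unset Printing Implicit Defensive.
Import Order.TTheory GRing.Theory Num.Theory.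
Local Open Scope classical_set_scope.
Local Open Scope ring_scope.

Definition mutual_indep d (T : measurableType d) (R : realType)
  (mu : probability T R) (I : finType) (S : pred I) (X : I -> T -> R) : Prop :=
  forall B : I -> set R, (forall x, measurable (B x)) ->
    fine (mu (\bigcap_(x in [set x | S x]) (X x @^-1` B x))) =
    \prod_(x | S x) fine (mu (X x @^-1` B x)).

(* A continuous (atomless) distribution on R. *)
Definition atomless (R : realType) (f : probability R R) : Prop :=
  forall x : R, f [set x] = 0%E.

Definition check_value (R : realType) (T : Type) (n m : nat)
  (adj : 'I_n -> 'I_m -> bool) (v : 'I_n -> T -> R) (w : 'I_n -> 'I_m -> T -> R)
  (k : 'I_m) (t : T) : R :=
  \sum_(i < n | adj i k) w i k t * v i t.

Definition support_nbr (R : realType) (T : Type) (n m : nat)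
  (adj : 'I_n -> 'I_m -> bool) (v : 'I_n -> T -> R) (k : 'I_m) (t : T)
  : {set 'I_n} :=
  [set i | adj i k && (v i t != 0)].

From HB Require Import structures.
From mathcomp Require Import all_boot all_order all_algebra.
From mathcomp Require Import all_classical all_reals all_analysis.
Import Order.TTheory GRing.Theory Num.Theory.
Local Open Scope classical_set_scope.
Local Open Scope ring_scope.

(* Both claims follow from one fact: when the variable node l is active
   (v_l <> 0), a combination  sum_(i,k) c_ik w_ik v_i  whose only term involving
   l is  c w_lk v_l  with c <> 0 vanishes only on a null set.  For c_k = 0 take
   for c the indicator of the edges at k; for c_k1 = c_k2 the difference of two
   such indicators, and l in the symmetric difference of the two supports.
   Write the combination as  W1 U + W2,  where U is whichever of v_l, w_lk is
   continuous, W1 <> 0 is c times the other one, and W2 gathers the terms not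
   involving l.  By mutual independence U is independent of the sigma-algebra
   generated by all the other variables, so (W, U) has a product law, and by
   Fubini  P(W1 U + W2 = 0) = E[P(U = - W2 / W1)] = 0,  since U has no atom
   outside 0. *)

Lemma negligible_big_setU (R : realType) d (T : measurableType d)
    (mu : {measure set T -> \bar R}) (I : Type) (s : seq I) (P : pred I)
    (F : I -> set T) :
  (forall i, P i -> mu.-negligible (F i)) ->
  mu.-negligible (\big[setU/set0]_(i <- s | P i) F i).
Proof.
move=> NF; elim/big_ind: _ => //; [exact: negligible_set0|exact: negligibleU].
Qed.

Section independence.
Context (R : realType) d (T : measurableType d) (mu : probability T R).

Lemma fineK_probability {A : set T} : measurable A -> (fine (mu A))%:E = mu A.
Proof. by move=> mA; rewrite fineK// fin_num_measure. Qed.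

(* Uniqueness of measures agreeing on a pi-system, applied to the measures
   F |-> mu (F `&` E) and F |-> mu E * mu F. *)
Lemma indep_sigma_ext (G : set (set T)) (E : set T) :
  G `<=` measurable -> setI_closed G -> G setT -> measurable E ->
  (forall F, G F -> mu (F `&` E) = mu E * mu F)%E ->
  forall F, <<s G >> F -> mu (F `&` E) = (mu E * mu F)%E.
Proof.
move=> Gm GI GT mE indepG F GF.
have E0 : 0 <= fine (mu E) by apply: fine_ge0; exact: measure_ge0.
rewrite -(fineK_probability mE).
apply: (@g_sigma_algebra_measure_unique _ _ _ G Gm (fun=> setT) (fun=> GT) _
  (mrestr mu mE) (mscale (NngNum E0) mu) GI) => //.
- by rewrite bigcup_const.
- move=> A GA; change (mu (A `&` E) = (fine (mu E))%:E * mu A)%E.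
  by rewrite fineK_probability// indepG.
- move=> k; change (mu (setT `&` E) < +oo)%E.
  by rewrite ltey_eq fin_num_measure//; exact: measurableI.
Qed.

Definition affine_roots : set ((R * R) * R)%type :=
  (snd @^-1` (~` [set 0])) `&` ((fun p => p.1.1 * p.2 + p.1.2) @^-1` [set 0]) `&`
  ((fun p => p.1.1) @^-1` (~` [set 0])).

Lemma measurable_affine_roots : measurable affine_roots.
Proof.
apply: measurableI; first apply: measurableI.
- rewrite -[X in measurable X]setTI.
  by apply: measurable_snd => //; exact: measurableC.
- rewrite -[X in measurable X]setTI; apply: measurable_realfun.measurable_funD => //.
    by apply: measurable_realfun.measurable_funM => //; exact: measurableT_comp.
  exact: measurableT_comp.
- rewrite -[X in measurable X]setTI; apply: measurableT_comp => //.
  exact: measurableC.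
Qed.

Lemma xsection_affine_roots (x : R * R) :
  xsection affine_roots x `<=` [set - x.2 / x.1] `\` [set 0].
Proof.
move=> u; rewrite /xsection /= inE => -[[/= u0 root] /eqP x0]; split => //.
apply: (mulIf x0); rewrite divfK// mulrC.
by apply/eqP; rewrite -subr_eq0 opprK root.
Qed.

Lemma indep_affine_root_negligible (U : T -> R) (W : T -> R * R) :
  measurable_fun setT U -> measurable_fun setT W ->
  (forall A C, measurable A -> measurable C ->
    mu (W @^-1` C `&` U @^-1` A) = (mu (W @^-1` C) * mu (U @^-1` A))%E) ->
  (forall x, mu (U @^-1` ([set x] `\` [set 0])) = 0%E) ->
  mu.-negligible [set t | U t != 0 /\ (W t).1 * U t + (W t).2 = 0 /\ (W t).1 != 0].
Proof.
move=> mU mW indepWU atomU; have mD := measurable_affine_roots.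
have mWU : measurable_fun setT (fun t => (W t, U t)) by exact: measurable_fun_pair.
pose pU : {mfun T >-> R} := HB.pack U (isMeasurableFun.Build _ _ _ _ U mU).
pose pW : {mfun T >-> (R * R)%type} := HB.pack W (isMeasurableFun.Build _ _ _ _ W mW).
pose pWU : {mfun T >-> ((R * R) * R)%type} :=
  HB.pack (fun t => (W t, U t)) (isMeasurableFun.Build _ _ _ _ _ mWU).
have -> : [set t | U t != 0 /\ (W t).1 * U t + (W t).2 = 0 /\ (W t).1 != 0] =
    (fun t => (W t, U t)) @^-1` affine_roots.
  apply/seteqP; split => t /=.
    by case=> /eqP U0 [root /eqP W0]; split; [split|].
  by case=> [[/= U0 root] W0]; split; [apply/eqP|split=> //; apply/eqP].
have law_prod : (distribution mu pW \x distribution mu pU)%E affine_roots =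
    distribution mu pWU affine_roots.
  apply: product_measure_unique => // A B mA mB.
  by rewrite /distribution /pushforward /= -indepWU//.
exists ((fun t => (W t, U t)) @^-1` affine_roots); split => //.
  by rewrite -[X in measurable X]setTI; exact: (mWU _ _ mD).
change (distribution mu pWU affine_roots = 0%E); rewrite -law_prod /product_measure1 /=.
apply: integral0_eq => x _ /=; apply/eqP.
rewrite -measure_le0 -(atomU (- x.2 / x.1)) /distribution /pushforward /=.
apply: le_measure; rewrite ?inE; last exact: xsection_affine_roots.
  exact: measurable_xsection.
exact: measurableD.
Qed.

End independence.

Section mutual_independence.
Context (R : realType) d (T : measurableType d) (mu : probability T R).
Variables (I : finType) (S : pred I) (X : I -> T -> R).
Hypothesis mX : forall i, measurable_fun setT (X i).
Hypothesis indepX : mutual_indep mu S X.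
Variable x0 : I.
Hypothesis Sx0 : S x0.

Definition others y := S y && (y != x0).

Definition others_cylinders : set (set T) := [set F | exists B : I -> set R,
  (forall y, measurable (B y)) /\
  F = \bigcap_(y in [set y | others y]) X y @^-1` B y].

Local Notation sigma_others := (g_sigma_algebraType others_cylinders).

Lemma others_cylinders_measurable : others_cylinders `<=` measurable.
Proof.
move=> _ [B [mB ->]]; apply: fin_bigcap_measurable; first exact: finite_finset.
by move=> y _; rewrite -[X in measurable X]setTI; exact: mX.
Qed.

Lemma others_cylinders_setI_closed : setI_closed others_cylinders.
Proof.
move=> _ _ [B [mB ->]] [C [mC ->]]; exists (fun y => B y `&` C y); split.
  by move=> y; exact: measurableI.
apply/seteqP; split => t /=.
  by move=> [BF CF] y oy; split; [exact: BF|exact: CF].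
by move=> BCF; split => y oy; have [] := BCF y oy.
Qed.

Lemma others_cylinders_setT : others_cylinders setT.
Proof. by exists (fun=> setT); split => //; apply/seteqP; split => t //= _ y _. Qed.

Lemma others_cylinders_indep (A : set R) : measurable A ->
  forall F, others_cylinders F ->
  mu (F `&` X x0 @^-1` A) = (mu (X x0 @^-1` A) * mu F)%E.
Proof.
move=> mA _ [B [mB ->]].
set F := \bigcap_(y in _) _.
have mF : measurable F by apply: others_cylinders_measurable; exists B.
have mX0 A' : measurable A' -> measurable (X x0 @^-1` A').
  by move=> mA'; rewrite -[X in measurable X]setTI; exact: mX.
have prod_rule A' : measurable A' ->
    fine (mu (F `&` X x0 @^-1` A')) =
    fine (mu (X x0 @^-1` A')) * \prod_(y | others y) fine (mu (X y @^-1` B y)).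
  move=> mA'; have := indepX (fun y => if y == x0 then A' else B y) _.
  rewrite (bigD1 x0) //= eqxx.
  have -> : \bigcap_(y in [set y | S y]) X y @^-1` (if y == x0 then A' else B y) =
      F `&` X x0 @^-1` A'.
    apply/seteqP; split => t /=.
      move=> inB; split; last by have := inB x0 Sx0; rewrite eqxx.
      by move=> y /andP[Sy yx0]; have := inB y Sy; rewrite (negbTE yx0).
    move=> [Ft A't] y Sy; case: ifPn => [/eqP -> //|yx0].
    by apply: Ft => /=; rewrite /others Sy yx0.
  move=> ->; last by move=> y; case: ifPn.
  by congr (_ * _); apply: eq_bigr => y /andP[_ /negbTE ->].
have probF := prod_rule setT measurableT.
rewrite preimage_setT setIT probability_setT /= mul1r in probF.
rewrite -fineK_probability; last by apply: measurableI => //; exact: mX0.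
by rewrite prod_rule// -probF EFinM !fineK_probability //; exact: mX0.
Qed.

Lemma sigma_others_indep (A : set R) (F : set T) :
  measurable A -> <<s others_cylinders >> F ->
  mu (F `&` X x0 @^-1` A) = (mu (X x0 @^-1` A) * mu F)%E.
Proof.
move=> mA; apply: indep_sigma_ext.
- exact: others_cylinders_measurable.
- exact: others_cylinders_setI_closed.
- exact: others_cylinders_setT.
- by rewrite -[X in measurable X]setTI; exact: mX.
- exact: others_cylinders_indep.
Qed.

Lemma measurable_others y : others y ->
  measurable_fun (setT : set sigma_others) (X y).
Proof.
move=> oy _ B mB; rewrite setTI; apply: sub_sigma_algebra.
exists (fun z => if z == y then B else setT); split; first by move=> z; case: ifPn.
apply/seteqP; split => t /=.
  by move=> Bt z oz; case: ifPn => [/eqP -> //|].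
by move=> inB; have := inB y oy; rewrite eqxx.
Qed.

Lemma measurable_fun_sigma_others {d'} {U : measurableType d'} {Y : T -> U} :
  measurable_fun (setT : set sigma_others) Y -> measurable_fun setT Y.
Proof.
move=> mY _ B mB; apply: (smallest_sub (@sigma_algebra_measurable _ T)
  others_cylinders_measurable); exact: mY.
Qed.

Lemma negligible_mul_root (c : R) (y0 : I) (Z : T -> R) : c != 0 -> others y0 ->
  measurable_fun (setT : set sigma_others) Z ->
  (forall x, mu (X x0 @^-1` ([set x] `\` [set 0])) = 0%E) ->
  mu.-negligible [set t | X x0 t != 0 /\ X y0 t != 0 /\ c * X y0 t * X x0 t + Z t = 0].
Proof.
move=> c0 oy0 mZ atom.
pose W t := (c * X y0 t, Z t).
have mW : measurable_fun (setT : set sigma_others) W.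
  apply: measurable_fun_pair => //.
  by apply: measurable_realfun.measurable_funM => //; exact: measurable_others.
have indepWX A C : measurable A -> measurable C ->
    mu (W @^-1` C `&` X x0 @^-1` A) = (mu (W @^-1` C) * mu (X x0 @^-1` A))%E.
  move=> mA mC; rewrite [RHS]muleC; apply: sigma_others_indep => //.
  by have := mW measurableT C mC; rewrite setTI.
have := @indep_affine_root_negligible _ _ _ mu (X x0) W (mX x0)
  (measurable_fun_sigma_others mW) indepWX atom.
apply: negligibleS => t [Xt0 [Yt0 root]].
by split=> //; split=> //=; rewrite mulf_neq0.
Qed.

End mutual_independence.

Lemma measurable_sum_off (R : realType) d (T : measurableType d) (n m : nat)
    (v : 'I_n -> T -> R) (w : 'I_n -> 'I_m -> T -> R) (c : 'I_n -> 'I_m -> R)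
    (l : 'I_n) :
  (forall i, i != l -> measurable_fun setT (v i)) ->
  (forall i k, i != l -> c i k != 0 -> measurable_fun setT (w i k)) ->
  measurable_fun setT
    (fun t => \sum_(i < n | i != l) \sum_(k < m) c i k * (w i k t * v i t)).
Proof.
move=> mv mw; rewrite (_ : (fun t => _) = fun t => \sum_(i < n)
    if i != l then \sum_(k < m) c i k * (w i k t * v i t) else 0); last first.
  by apply/funext => t; rewrite big_mkcond.
apply: measurable_sum => i /=; case: (boolP (i != l)) => [il|_]; last exact: measurable_cst.
apply: measurable_sum => k /=; have [c0|c0] := eqVneq (c i k) 0.
  by rewrite c0; under eq_fun do rewrite mul0r; exact: measurable_cst.
apply: measurable_realfun.measurable_funM => //.
by apply: measurable_realfun.measurable_funM; [exact: mw|exact: mv].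
Qed.

Section check_nodes.
Context (R : realType) (d : measure_display) (T : measurableType d)
  (mu : probability T R) (n m : nat) (adj : 'I_n -> 'I_m -> bool)
  (alpha : R) (f g : probability R R)
  (v : 'I_n -> T -> R) (w : 'I_n -> 'I_m -> T -> R).
Hypothesis mv : forall i, measurable_fun setT (v i).
Hypothesis mw : forall i k, measurable_fun setT (w i k).
Hypothesis law_v : forall i (B : set R), measurable B ->
  mu (v i @^-1` B) = ((1 - alpha)%:E * \d_(0%R : R) B + alpha%:E * f B)%E.
Hypothesis law_w : forall i k (B : set R), adj i k -> measurable B ->
  mu (w i k @^-1` B) = g B.

(* The independent family: the signal entries [inl i] and the weights
   [inr (i, k)] of the edges of the graph. *)
Let S (x : 'I_n + ('I_n * 'I_m)) : bool :=
  match x with inl _ => true | inr p => adj p.1 p.2 end.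
Let X (x : 'I_n + ('I_n * 'I_m)) : T -> R :=
  match x with inl i => v i | inr p => w p.1 p.2 end.

Hypothesis indepX : mutual_indep mu S X.
Hypothesis g0 : g [set 0] = 0%E.
Hypothesis atomless_f_or_g : atomless f \/ atomless g.

Local Notation sigma_others x0 :=
  (g_sigma_algebraType (@others_cylinders R d T _ S X x0)).

Definition variable_node (x : 'I_n + ('I_n * 'I_m)) : 'I_n :=
  match x with inl i => i | inr p => p.1 end.

Lemma measurable_X x : measurable_fun setT (X x).
Proof. by case: x => [i|[i k]]; [exact: mv|exact: mw]. Qed.

Lemma others_variable_node x0 y : S y ->
  variable_node y != variable_node x0 -> @others _ S x0 y.
Proof. by move=> Sy; rewrite /others Sy; apply: contra => /eqP ->. Qed.

Lemma signal_atomless : atomless f ->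
  forall i x, mu (v i @^-1` ([set x] `\` [set 0])) = 0%E.
Proof.
move=> fa i x; rewrite law_v; last exact: measurableD.
rewrite diracE memNset; last by move=> [_]; apply.
rewrite (_ : f _ = 0%E) ?mule0 ?adde0//.
apply/eqP; rewrite -measure_le0 -(fa x).
by apply: le_measure; rewrite ?inE//; exact: measurableD.
Qed.

Lemma weight_atomless i k : atomless g -> adj i k ->
  forall x, mu (w i k @^-1` ([set x] `\` [set 0])) = 0%E.
Proof.
move=> ga a x; rewrite law_w //; last exact: measurableD.
apply/eqP; rewrite -measure_le0 -(ga x).
by apply: le_measure; rewrite ?inE//; exact: measurableD.
Qed.

Lemma negligible_weight_zero i k : adj i k -> mu.-negligible (w i k @^-1` [set 0]).
Proof.
move=> a; exists (w i k @^-1` [set 0]); split => //; last by rewrite law_w.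
by rewrite -[X in measurable X]setTI; exact: mw.
Qed.

Definition lincomb (c : 'I_n -> 'I_m -> R) (t : T) : R :=
  \sum_(i < n) \sum_(k < m) c i k * (w i k t * v i t).

Definition lincomb_off (l : 'I_n) (c : 'I_n -> 'I_m -> R) (t : T) : R :=
  \sum_(i < n | i != l) \sum_(k < m) c i k * (w i k t * v i t).

Lemma lincomb_split l k0 c : (forall k, k != k0 -> c l k = 0) ->
  forall t, lincomb c t = c l k0 * w l k0 t * v l t + lincomb_off l c t.
Proof.
move=> cl t; rewrite /lincomb (bigD1 l)//= (bigD1 k0)//= big1 ?addr0 ?mulrA//.
by move=> k /cl ->; rewrite mul0r.
Qed.

Lemma measurable_lincomb_off x0 c : S x0 -> (forall i k, c i k != 0 -> adj i k) ->
  measurable_fun (setT : set (sigma_others x0)) (lincomb_off (variable_node x0) c).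
Proof.
move=> Sx0 cadj.
apply: (@measurable_sum_off _ _ (sigma_others x0) n m v w c) => [i il|i k il cik].
  by apply: (@measurable_others _ _ _ _ S X x0 (inl i)); apply: others_variable_node.
apply: (@measurable_others _ _ _ _ S X x0 (inr (i, k))).
by apply: others_variable_node => //=; exact: cadj.
Qed.

Lemma lincomb_root_negligible l k0 c : adj l k0 -> c l k0 != 0 ->
  (forall k, k != k0 -> c l k = 0) -> (forall i k, c i k != 0 -> adj i k) ->
  mu.-negligible [set t | v l t != 0 /\ lincomb c t = 0].
Proof.
move=> a c0 cl cadj.
have Sv : S (inl l) by [].
have Sw : S (inr (l, k0)) := a.
have ow : @others _ S (inl l) (inr (l, k0)) by rewrite /others Sw.
have NE : mu.-negligible [set t | v l t != 0 /\ w l k0 t != 0 /\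
    c l k0 * w l k0 t * v l t + lincomb_off l c t = 0].
  case: atomless_f_or_g => [fa|ga].
    exact (@negligible_mul_root _ _ _ mu _ S X measurable_X indepX (inl l) Sv
      (c l k0) (inr (l, k0)) _ c0 ow (measurable_lincomb_off _ _ Sv cadj)
      (signal_atomless fa l)).
  have := @negligible_mul_root _ _ _ mu _ S X measurable_X indepX (inr (l, k0)) Sw
    (c l k0) (inl l) _ c0 isT
    (measurable_lincomb_off _ _ Sw cadj) (weight_atomless l k0 ga a).
  by apply: negligibleS => t [vt [wt root]]; split=> //; split=> //; rewrite mulrAC.
apply: (negligibleS _ (negligibleU NE (negligible_weight_zero l k0 a))) => t [vt lc0].
have [w0|w0] := eqVneq (w l k0 t) 0; [by right|left].
by split=> //; split=> //; rewrite -(lincomb_split _ _ _ cl).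
Qed.

Definition edge_indicator (k0 : 'I_m) (i : 'I_n) (k : 'I_m) : R :=
  ((k == k0) && adj i k0)%:R.

Lemma edge_indicator_adj k0 i k : edge_indicator k0 i k != 0 -> adj i k.
Proof.
by rewrite /edge_indicator; have [->|] := eqVneq k k0; case: (adj i k0); rewrite ?eqxx.
Qed.

Lemma lincomb_edge_indicator k0 t :
  lincomb (edge_indicator k0) t = check_value adj v w k0 t.
Proof.
rewrite /lincomb /check_value [RHS]big_mkcond; apply: eq_bigr => i _.
rewrite (bigD1 k0)//= big1 ?addr0 => [|k /negbTE kk0]; last first.
  by rewrite /edge_indicator kk0 mul0r.
by rewrite /edge_indicator eqxx; case: (adj i k0); rewrite ?mul1r ?mul0r.
Qed.

Lemma lincombB c1 c2 t :
  lincomb (fun i k => c1 i k - c2 i k) t = lincomb c1 t - lincomb c2 t.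
Proof.
rewrite /lincomb -sumrB; apply: eq_bigr => i _.
by rewrite -sumrB; apply: eq_bigr => k _; rewrite mulrBl.
Qed.

Lemma check_value_zero_support_empty k :
  {ae mu, forall t, check_value adj v w k t = 0 -> support_nbr adj v k t = finset.set0}.
Proof.
have N : mu.-negligible (\big[setU/set0]_(l | adj l k)
    [set t | v l t != 0 /\ lincomb (edge_indicator k) t = 0]).
  apply: negligible_big_setU => l a; apply: (lincomb_root_negligible l k _ a).
  - by rewrite /edge_indicator eqxx a oner_neq0.
  - by move=> k' /negbTE kk; rewrite /edge_indicator kk.
  - exact: edge_indicator_adj.
apply: (negligibleS _ N) => t /= /not_implyP[c0 /eqP/set0Pn[l]].
rewrite inE => /andP[a vt]; rewrite (bigD1 l a) /=; left.
by split=> //; rewrite lincomb_edge_indicator.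
Qed.

Lemma check_value_neq k1 k2 : k1 != k2 ->
  {ae mu, forall t, support_nbr adj v k1 t != support_nbr adj v k2 t ->
                    check_value adj v w k1 t != check_value adj v w k2 t}.
Proof.
move=> k12; pose c i k := edge_indicator k1 i k - edge_indicator k2 i k.
have cadj i k : c i k != 0 -> adj i k.
  move=> ci; apply: contraT => nadj; move: ci.
  have e0 k0 : edge_indicator k0 i k = 0.
    by apply/eqP; apply: contraNT nadj; exact: edge_indicator_adj.
  by rewrite /c !e0 subrr eqxx.
have N : mu.-negligible (\big[setU/set0]_(l | adj l k1 != adj l k2)
    [set t | v l t != 0 /\ lincomb c t = 0]).
  apply: negligible_big_setU => l a12.
  have [a1|a1] := boolP (adj l k1).
    have a2 : adj l k2 = false by move: a12; rewrite a1; case: (adj l k2).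
    apply: (lincomb_root_negligible l k1 c a1 _ _ cadj).
    - by rewrite /c /edge_indicator eqxx a1 (negbTE k12) /= subr0 oner_neq0.
    - by move=> k kk1; rewrite /c /edge_indicator (negbTE kk1) a2 andbF subrr.
  have a2 : adj l k2 by move: a12; rewrite (negbTE a1); case: (adj l k2).
  apply: (lincomb_root_negligible l k2 c a2 _ _ cadj).
  - by rewrite /c /edge_indicator eqxx a2 (negbTE a1) andbF /= sub0r oppr_eq0 oner_neq0.
  - by move=> k kk2; rewrite /c /edge_indicator (negbTE kk2) (negbTE a1) andbF subrr.
apply: (negligibleS _ N) => t /= /not_implyP[S12 /negP/negPn/eqP c12].
have [l] : exists l, (l \in support_nbr adj v k1 t) != (l \in support_nbr adj v k2 t).
  apply/existsP; apply: contraNT S12 => /existsPn same; apply/eqP/setP => l.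
  by move: (same l); rewrite negbK => /eqP.
rewrite !inE; have [vt|_] := boolP (v l t != 0); rewrite ?andbT ?andbF // => a12.
rewrite (bigD1 l a12) /=; left; split=> //.
by rewrite lincombB !lincomb_edge_indicator c12 subrr.
Qed.

End check_nodes.

Theorem theorem1 (R : realType) (d : measure_display) (T : measurableType d)
  (mu : probability T R) (n m : nat) (adj : 'I_n -> 'I_m -> bool)
  (alpha : R) (f g : probability R R)
  (v : 'I_n -> T -> R) (w : 'I_n -> 'I_m -> T -> R) :
  0 <= alpha <= 1 ->
  (forall i, measurable_fun setT (v i)) ->
  (forall i k, measurable_fun setT (w i k)) ->
  (* law of each signal entry: 0 w.p. 1 - alpha, drawn from f w.p. alpha *)
  (forall i (B : set R), measurable B ->
     mu (v i @^-1` B) = ((1 - alpha)%:E * \d_(0%R : R) B + alpha%:E * f B)%E) ->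
  (forall i k (B : set R), adj i k -> measurable B -> mu (w i k @^-1` B) = g B) ->
  mutual_indep mu
    (fun x : 'I_n + ('I_n * 'I_m) =>
       match x with inl _ => true | inr p => adj p.1 p.2 end)
    (fun x => match x with inl i => v i | inr p => w p.1 p.2 end) ->
  (* edge weights are nonzero (almost surely) *)
  g [set 0] = 0%E ->
  atomless f \/ atomless g ->
  (forall k : 'I_m,
     {ae mu, forall t, check_value adj v w k t = 0 -> support_nbr adj v k t = finset.set0})
  /\
  (forall k1 k2 : 'I_m, k1 != k2 ->
     {ae mu, forall t, support_nbr adj v k1 t != support_nbr adj v k2 t ->
                       check_value adj v w k1 t != check_value adj v w k2 t}).
Proof.
move=> _ mv mw law_v law_w indepX g0 atomless_f_or_g; split.
- exact (@check_value_zero_support_empty R d T mu n m adj alpha f g v w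
    mv mw law_v law_w indepX g0 atomless_f_or_g).
- exact (@check_value_neq R d T mu n m adj alpha f g v w
    mv mw law_v law_w indepX g0 atomless_f_or_g).
Qed.
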